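(* Let $c \in \mathbb{Z}$ with $c \equiv 1 \pmod 4$. Fix an algebraic closure $\overline{\mathbb{Q}}_2$ of $\mathbb{Q}_2$, an element $\delta \in \overline{\mathbb{Q}}_2$ with $\delta^2 = -c$, and elements $\alpha, \beta \in \overline{\mathbb{Q}}_2$ with $\alpha^2 = -c + \delta$ and $\beta^2 = -c - \delta$. Let $L_c = \mathbb{Q}_2(\alpha,\beta)$ (the splitting field over $\mathbb{Q}_2$ of $(x^2+c)^2+c$), and let $v_\pi$ be the valuation on $L_c$ normalized so that $v_\pi(2) = 8$. Then $v_\pi(\alpha + \alpha\beta + \beta) = 6$.
   Context: For $c \equiv 1 \pmod 4$, the extension $L_c/\mathbb{Q}_2$ is totally ramified of degree $8$, so $v_\pi$ is the normalized valuation associated to a uniformizer $\pi$ of $L_c$, and $v_\pi(x) = 8 v_2(x)$ where $v_2$ is the $2$-adic valuation extended to $\overline{\mathbb{Q}}_2$. *)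

From HB Require Import structures.
From mathcomp Require Import all_boot all_order all_algebra.
Set Implicit Arguments. Unset Strict Implicit. Unset Printing Implicit Defensive.
Import Order.TTheory GRing.Theory Num.Theory.
Local Open Scope ring_scope.

(* A (rank one, rational-valued) valuation v on a field K, normalised by
   v 2 = 1, i.e. extending the 2-adic valuation v_2 of Q.  The value of v at 0
   (formally +oo) is irrelevant and left unconstrained. *)
Record two_adic_valuation (K : fieldType) (v : K -> rat) : Prop := {
  val_mul : forall x y : K, x != 0 -> y != 0 -> v (x * y) = v x + v y;
  val_add : forall x y : K, x != 0 -> y != 0 -> x + y != 0 ->
              Num.min (v x) (v y) <= v (x + y);
  val_two : v 2%:R = 1
}.

From HB Require Import structures.
From mathcomp Require Import all_boot all_order all_algebra.
From mathcomp Require Import ring lra.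
Set Implicit Arguments. Unset Strict Implicit. Unset Printing Implicit Defensive.
Import Order.TTheory GRing.Theory Num.Theory.
Local Open Scope ring_scope.

(* Write c = 4q + 1.  The factors of (delta + 1) (delta - 1) = -(c + 1) differ
   by 2, and their product has valuation v(c + 1) = 1, so both have valuation
   1/2.  Hence alpha^2 = (delta - 1) - 4q and beta^2 = -(delta + 1) - 4q have
   valuation 1/2, i.e. v alpha = v beta = 1/4.  For x = alpha + alpha beta + beta
   and y = alpha + beta - alpha beta one finds x y = 2 alpha beta - 4 c (q + 1),
   of valuation v (2 alpha beta) = 3/2, while x - y = 2 alpha beta; the same
   balancing argument gives v x = v y = 3/4. *)

Section TwoAdicValuation.
Variables (K : fieldType) (v : K -> rat).
Hypothesis hv : two_adic_valuation v.

Lemma val1 : v 1 = 0.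
Proof. by have := val_mul hv (oner_neq0 K) (oner_neq0 K); rewrite mulr1; lra. Qed.

Lemma valN x : x != 0 -> v (- x) = v x.
Proof.
move=> x0; have N10 : (-1 : K) != 0 by rewrite oppr_eq0 oner_neq0.
have vN1 : v (-1) = 0.
  by have := val_mul hv N10 N10; rewrite mulrNN mulr1 val1; lra.
by rewrite -mulN1r (val_mul hv N10 x0) vN1 add0r.
Qed.

Lemma valXn x n : x != 0 -> v (x ^+ n) = n%:R * v x.
Proof.
move=> x0; elim: n => [|n IH]; first by rewrite expr0 val1 mul0r.
by rewrite exprS (val_mul hv x0) ?expf_neq0 // IH -add1n natrD mulrDl mul1r.
Qed.

Lemma val_addr_lt a b : a != 0 -> b != 0 -> v a < v b ->
  a + b != 0 /\ v (a + b) = v a.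
Proof.
move=> a0 b0 lt_ab.
have ab0 : a + b != 0.
  apply: contraTneq lt_ab => /eqP; rewrite addr_eq0 => /eqP ->.
  by rewrite valN // ltxx.
split=> //; have ge_ab := val_add hv a0 b0 ab0.
have Nb0 : - b != 0 by rewrite oppr_eq0.
have := val_add hv ab0 Nb0; rewrite addrK valN // => /(_ a0) ge_a.
by move: ge_ab ge_a; rewrite !ge_min => /orP[] ? /orP[] ?; lra.
Qed.

(* If v a < v b then v (a - b) = v a < (v a + v b) / 2, and symmetrically. *)
Lemma val_balanced a b : a != 0 -> b != 0 ->
  v a + v b <= 2 * v (a - b) -> v a = v b.
Proof.
move=> a0 b0 le_ab; have Nb0 : - b != 0 by rewrite oppr_eq0.
case: (ltgtP (v a) (v b)) => // [lt_ab|lt_ba].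
- have [|_ vab] := @val_addr_lt a (- b) a0 Nb0; first by rewrite valN.
  lra.
- have [|_ vab] := @val_addr_lt (- b) a Nb0 a0; first by rewrite valN.
  by move: vab; rewrite addrC valN //; lra.
Qed.

Definition vintegral (z : K) := z != 0 -> 0 <= v z.

Lemma vintegral_nat n : vintegral n%:R.
Proof.
elim: n => [|n IH]; first by rewrite /vintegral eqxx.
rewrite -natr1 => n10; have [->|n0] := eqVneq (n%:R : K) 0.
  by rewrite add0r val1.
have := val_add hv n0 (oner_neq0 K) n10; have := IH n0.
by rewrite ge_min val1 => ? /orP[] ?; lra.
Qed.

Lemma vintegral_int (z : int) : vintegral z%:~R.
Proof.
case: z => n; first exact: vintegral_nat.
rewrite /vintegral NegzE mulrNz oppr_eq0 => n0; rewrite valN //; exact: vintegral_nat.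
Qed.

Lemma val_addr_mul_vintegral a d z : a != 0 -> d != 0 -> v a < v d ->
  vintegral z -> a + d * z != 0 /\ v (a + d * z) = v a.
Proof.
move=> a0 d0 lt_ad z_int; have [->|z0] := eqVneq z 0; first by rewrite mulr0 addr0.
apply: val_addr_lt; rewrite ?mulf_neq0 // (val_mul hv d0 z0).
by have := z_int z0; lra.
Qed.

End TwoAdicValuation.

Section QuarticSplittingField.
Variables (K : fieldType) (v : K -> rat).
Hypothesis hv : two_adic_valuation v.
Hypothesis two_neq0 : (2 : K) != 0.
Variables (q : int) (delta alpha beta : K).
Hypothesis hdelta : delta ^+ 2 = - (4 * q + 1)%:~R.
Hypothesis halpha : alpha ^+ 2 = - (4 * q + 1)%:~R + delta.
Hypothesis hbeta : beta ^+ 2 = - (4 * q + 1)%:~R - delta.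

Lemma val4 : (4 : K) != 0 /\ v 4 = 2.
Proof.
have -> : (4 : K) = 2 ^+ 2 by rewrite -natrX.
by rewrite expf_neq0 // (valXn hv 2 two_neq0) (val_two hv); split=> //; lra.
Qed.

Lemma val_delta_pm1 :
  [/\ delta + 1 != 0, delta - 1 != 0, v (delta + 1) = 1/2 & v (delta - 1) = 1/2].
Proof.
have [odd0 v_odd] : 1 + 2 * q%:~R != 0 :> K /\ v (1 + 2 * q%:~R) = 0.
  rewrite -(val1 hv); apply: (val_addr_mul_vintegral hv) => //.
  - exact: oner_neq0.
  - by rewrite (val1 hv) (val_two hv); lra.
  - exact: vintegral_int.
have e_prod : (delta + 1) * (delta - 1) = - (2 * (1 + 2 * q%:~R)).
  transitivity (delta ^+ 2 - 1); first by ring.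
  by rewrite hdelta rmorphD rmorphM /=; ring.
have : (delta + 1) * (delta - 1) != 0 by rewrite e_prod oppr_eq0 mulf_neq0.
rewrite mulf_eq0 negb_or => /andP[dp0 dm0].
have v_sum : v (delta + 1) + v (delta - 1) = 1.
  rewrite -(val_mul hv dp0 dm0) e_prod valN ?mulf_neq0 //.
  by rewrite (val_mul hv) // (val_two hv) v_odd addr0.
have v_diff : v ((delta + 1) - (delta - 1)) = 1.
  by rewrite (_ : _ - _ = 2) ?(val_two hv) //; ring.
have := val_balanced hv dp0 dm0; rewrite v_sum v_diff => eq_v.
by split=> //; have := eq_v ltac:(lra); lra.
Qed.

Lemma val_root_sq_addr_4int x a (z : int) : x ^+ 2 = a + 4 * z%:~R ->
  a != 0 -> v a = 1/2 -> x != 0 /\ v x = 1/4.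
Proof.
move=> e_x2 a0 va; have [four0 v4] := val4.
have [|x20 vx2] := val_addr_mul_vintegral hv a0 four0 _ (vintegral_int hv (z := z)).
  by rewrite va v4; lra.
rewrite -e_x2 in x20 vx2.
have x0 : x != 0 by apply: contraNneq x20 => ->; rewrite expr0n.
by split=> //; move: vx2; rewrite (valXn hv 2 x0) va; lra.
Qed.

Lemma val_alpha : alpha != 0 /\ v alpha = 1/4.
Proof.
have [_ dm0 _ vdm] := val_delta_pm1.
apply: (val_root_sq_addr_4int (z := - q)) dm0 vdm.
by rewrite halpha rmorphN rmorphD rmorphM /=; ring.
Qed.

Lemma val_beta : beta != 0 /\ v beta = 1/4.
Proof.
have [dp0 _ vdp _] := val_delta_pm1.
apply: (val_root_sq_addr_4int (a := - (delta + 1)) (z := - q)).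
- by rewrite hbeta rmorphN rmorphD rmorphM /=; ring.
- by rewrite oppr_eq0.
- by rewrite valN.
Qed.

Lemma val_2_alpha_beta : 2 * (alpha * beta) != 0 /\ v (2 * (alpha * beta)) = 3/2.
Proof.
have [a0 va] := val_alpha; have [b0 vb] := val_beta.
rewrite !mulf_neq0 // !(val_mul hv) ?mulf_neq0 // (val_two hv) va vb.
by split=> //; lra.
Qed.

Lemma val_mul_conj :
  let x := alpha + alpha * beta + beta in let y := alpha + beta - alpha * beta in
  x * y != 0 /\ v (x * y) = 3/2.
Proof.
move=> x y; have [ab0 vab] := val_2_alpha_beta; have [four0 v4] := val4.
have e_sum : alpha ^+ 2 + beta ^+ 2 = - 2 * (4 * q + 1)%:~R.
  by rewrite halpha hbeta; ring.
have e_prod : alpha ^+ 2 * beta ^+ 2 = (4 * q + 1)%:~R ^+ 2 + (4 * q + 1)%:~R.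
  rewrite halpha hbeta; transitivity ((4 * q + 1)%:~R ^+ 2 - delta ^+ 2 : K).
    by ring.
  by rewrite hdelta; ring.
have -> : x * y = 2 * (alpha * beta) + 4 * (- ((4 * q + 1) * (q + 1)))%:~R.
  transitivity (alpha ^+ 2 + beta ^+ 2 + 2 * (alpha * beta) - alpha ^+ 2 * beta ^+ 2).
    by rewrite /x /y; ring.
  by rewrite e_sum e_prod !(rmorphN, rmorphM, rmorphD) /=; ring.
rewrite -vab; apply: (val_addr_mul_vintegral hv) => //.
  by rewrite vab v4; lra.
exact: vintegral_int.
Qed.

Lemma val_alpha_mulD_beta :
  alpha + alpha * beta + beta != 0 /\ v (alpha + alpha * beta + beta) = 3/4.
Proof.
have [ab0 vab] := val_2_alpha_beta.
have [+ vxy] := val_mul_conj; set x := alpha + _ + _; set y := _ - _.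
rewrite mulf_eq0 negb_or => /andP[x0 y0].
have v_sum : v x + v y = 3/2 by rewrite -(val_mul hv x0 y0).
have v_diff : v (x - y) = 3/2 by rewrite -vab /x /y; congr v; ring.
have eq_v := val_balanced hv x0 y0 ltac:(rewrite v_sum v_diff; lra).
by split=> //; lra.
Qed.

End QuarticSplittingField.

Theorem lemma7p1 (K : closedFieldType) (v : K -> rat)
  (charK0 : [pchar K] =i pred0) (hv : two_adic_valuation v)
  (c : int) (hc : (c %% 4)%Z = 1)
  (delta alpha beta : K)
  (hdelta : delta ^+ 2 = - c%:~R)
  (halpha : alpha ^+ 2 = - c%:~R + delta)
  (hbeta : beta ^+ 2 = - c%:~R - delta) :
  alpha + alpha * beta + beta != 0 /\
  8%:R * v (alpha + alpha * beta + beta) = 6%:R.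
Proof.
have two_neq0 : (2 : K) != 0 by rewrite ((pcharf0P K).1 charK0 2).
have [q c_eq] : exists q : int, c = 4 * q + 1.
  by exists (c %/ 4)%Z; rewrite {1}(divz_eq c 4) hc mulrC.
subst c; have [x0 vx] := val_alpha_mulD_beta hv two_neq0 hdelta halpha hbeta.
by split=> //; rewrite vx; lra.
Qed.
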